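(* Let $L\in(0,\infty)$ and for $k\in\mathbb{N}$ put $n_k:=\lfloor (k/L)^2\rfloor$. Let $x\in F(1/2,1)$ and $\epsilon\in(0,\infty)$ small. Then for all sufficiently large $k$, $$(1-\epsilon)\,e^{k/L}\ \le\ S_{n_k}(x)-S_{n_{k-1}}(x)\ \le\ (1+\epsilon)\Big(\frac{k}{L}\Big)^2 e^{k/L}.$$
   Context: Every $x\in(0,1)\setminus\mathbb{Q}$ has a unique infinite continued fraction expansion $x=[a_1(x),a_2(x),\dots]$ with partial quotients $a_i(x)\in\mathbb{N}=\{1,2,\dots\}$. For $n\in\mathbb{N}$ let $T_n(x):=\max\{a_k(x):1\le k\le n\}$ and $S_n(x):=\sum_{j=1}^n a_j(x)$. Define $$F(1/2,1):=\Big\{x\in(0,1)\setminus\mathbb{Q}:\ \lim_{n\to\infty}\frac{T_n(x)}{e^{\sqrt{n}}}=1\Big\}.$$ *)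

From Stdlib Require Import Reals Lra Lia ZArith Arith.
Open Scope R_scope.

(* floor: Int_part r = up r - 1 is exactly the floor of r in Stdlib. *)
Definition floorR (r : R) : Z := Int_part r.

Definition irrational (x : R) : Prop :=
  ~ (exists p q : Z, q <> 0%Z /\ x = IZR p / IZR q).

Definition gauss (x : R) : R := / x - IZR (floorR (/ x)).

(* a_n(x) for n >= 1: a_n(x) = floor(1 / T^{n-1}(x)); a_0 is a dummy value *)
Definition pq (n : nat) (x : R) : nat :=
  match n with
  | O => 0%nat
  | S m => Z.to_nat (floorR (/ (Nat.iter m gauss x)))
  end.

Fixpoint Tmax (n : nat) (x : R) : nat :=
  match n with
  | O => 0%nat
  | S m => Nat.max (Tmax m x) (pq (S m) x)
  end.

Fixpoint Ssum (n : nat) (x : R) : nat :=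
  match n with
  | O => 0%nat
  | S m => (Ssum m x + pq (S m) x)%nat
  end.

Definition F_half_one (x : R) : Prop :=
  0 < x < 1 /\ irrational x /\
  Un_cv (fun n => INR (Tmax n x) / exp (sqrt (INR n))) 1.

Definition nk (L : R) (k : nat) : nat := Z.to_nat (floorR ((INR k / L) ^ 2)).

(* Put t := k/L, n := n_k and m := n_(k-1), so that sqrt n lies in [t - 1/t, t] and
   sqrt m <= t - 1/L.  Since T_n ~ e^(sqrt n), we get T_n = e^t (1 + o(1)) while
   T_m <= e^(t - 1/L) (1 + o(1)) < T_n.  A strict increase of the running maximum
   forces a partial quotient equal to T_n among a_(m+1), ..., a_n, so
   T_n <= S_n - S_m; trivially S_n - S_m <= (n - m) T_n <= t^2 T_n. *)

From Stdlib Require Import Reals Lra Lia ZArith.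
From Coquelicot Require Import Coquelicot.
Open Scope R_scope.

Lemma Ssum_mono x m n : (m <= n)%nat -> (Ssum m x <= Ssum n x)%nat.
Proof. induction 1; simpl; lia. Qed.

Lemma Tmax_mono x m n : (m <= n)%nat -> (Tmax m x <= Tmax n x)%nat.
Proof. induction 1; simpl; lia. Qed.

Lemma Ssum_add_Tmax_le x m n :
  (Tmax m x < Tmax n x)%nat -> (Ssum m x + Tmax n x <= Ssum n x)%nat.
Proof.
  induction n as [|n IH]; intros Hlt.
  - simpl in Hlt; lia.
  - destruct (le_lt_dec m n) as [Hmn|Hnm].
    + pose proof (Ssum_mono x m n Hmn).
      cbn [Tmax Ssum] in *.
      destruct (Nat.le_gt_cases (pq (S n) x) (Tmax n x)).
      * rewrite Nat.max_l in * by lia. specialize (IH Hlt). lia.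
      * rewrite Nat.max_r in * by lia. lia.
    + pose proof (Tmax_mono x (S n) m Hnm). lia.
Qed.

Lemma Ssum_le_add_Tmax x m n :
  (m <= n)%nat -> (Ssum n x <= Ssum m x + (n - m) * Tmax n x)%nat.
Proof.
  induction 1 as [|n Hmn IH].
  - lia.
  - pose proof (Tmax_mono x n (S n) (Nat.le_succ_diag_r n)).
    assert (Ha : (pq (S n) x <= Tmax (S n) x)%nat) by (cbn [Tmax]; lia).
    assert (((n - m) * Tmax n x <= (n - m) * Tmax (S n) x)%nat) by nia.
    replace (S n - m)%nat with (S (n - m)) by lia.
    cbn [Ssum]. rewrite Nat.mul_succ_l. lia.
Qed.

Lemma nk_bounds L k :
  INR (nk L k) <= (INR k / L) ^ 2 /\ (INR k / L) ^ 2 - 1 < INR (nk L k).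
Proof.
  unfold nk, floorR.
  set (r := (INR k / L) ^ 2).
  assert (Hr : 0 <= r) by apply pow2_ge_0.
  destruct (base_Int_part r) as [H1 H2].
  assert (Hpos : (0 <= Int_part r)%Z).
  { assert (-1 < Int_part r)%Z by (apply lt_IZR; lra). lia. }
  rewrite INR_IZR_INZ, Z2Nat.id by exact Hpos. lra.
Qed.

Lemma exp_le_compat a b : a <= b -> exp a <= exp b.
Proof. intros [H|H]; [left; apply exp_increasing, H | subst; right; reflexivity]. Qed.

Lemma sqrt_le_of_sqr_le r t : 0 <= t -> r <= t ^ 2 -> sqrt r <= t.
Proof. intros Ht Hr. rewrite <- (sqrt_pow2 t Ht). apply sqrt_le_1_alt, Hr. Qed.

(* (t - 1/t)^2 = t^2 - 2 + 1/t^2 <= t^2 - 1 as soon as t >= 1. *)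
Lemma sub_inv_le_sqrt r t : 1 <= t -> t ^ 2 - 1 < r -> t - / t <= sqrt r.
Proof.
  intros Ht Hr.
  assert (Hinv : 0 < / t <= 1) by (split; [apply Rinv_0_lt_compat | rewrite <- Rinv_1; apply Rinv_le_contravar]; lra).
  assert (Htt : t * / t = 1) by (field; lra).
  rewrite <- (sqrt_pow2 (t - / t)) by nra.
  apply sqrt_le_1_alt. nra.
Qed.

Lemma exp_sub_inv_ge t : 0 < t -> (1 - / t) * exp t <= exp (t - / t).
Proof.
  intros Ht. unfold Rminus at 2. rewrite exp_plus, Rmult_comm.
  apply Rmult_le_compat_l; [left; apply exp_pos|].
  pose proof (exp_ineq1_le (- / t)). lra.
Qed.

Lemma sqrt_nk_le L k : 0 < L -> sqrt (INR (nk L k)) <= INR k / L.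
Proof.
  intros HL. apply sqrt_le_of_sqr_le; [|apply nk_bounds].
  apply Rdiv_le_0_compat; [apply pos_INR | exact HL].
Qed.

Lemma sqrt_nk_ge L k : 1 <= INR k / L -> INR k / L - / (INR k / L) <= sqrt (INR (nk L k)).
Proof. intros Ht. apply sub_inv_le_sqrt; [exact Ht | apply nk_bounds]. Qed.

Lemma sqrt_nk_pred_le L k :
  0 < L -> (1 <= k)%nat -> sqrt (INR (nk L (k - 1))) <= INR k / L - / L.
Proof.
  intros HL Hk.
  replace (INR k / L - / L) with (INR (k - 1) / L)
    by (rewrite minus_INR by exact Hk; simpl; field; lra).
  apply sqrt_nk_le, HL.
Qed.

Lemma eventually_INR_ge r : eventually (fun k => r <= INR k).
Proof.
  pose proof (proj2 (is_lim_seq_spec INR p_infty) is_lim_seq_INR r) as H.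
  revert H. apply filter_imp. intros k. lra.
Qed.

Lemma eventually_pred (P : nat -> Prop) :
  eventually P -> eventually (fun k => P (k - 1)%nat).
Proof. intros [N HN]. exists (S N). intros k Hk. apply HN. lia. Qed.

Lemma eventually_nk L (P : nat -> Prop) :
  0 < L -> eventually P -> eventually (fun k => P (nk L k)).
Proof.
  intros HL [N HN].
  generalize (eventually_INR_ge (L * (INR N + 1))). apply filter_imp. intros k Hk.
  apply HN, INR_le.
  destruct (nk_bounds L k) as [_ Hn].
  assert (HN1 : INR N + 1 <= INR k / L) by (apply Rmult_le_reg_l with L; [lra | field_simplify; lra]).
  pose proof (pos_INR N). nra.
Qed.

Lemma Tmax_asymptotic x d :
  F_half_one x -> 0 < d ->
  eventually (fun n => (1 - d) * exp (sqrt (INR n)) <= INR (Tmax n x)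
                       <= (1 + d) * exp (sqrt (INR n))).
Proof.
  intros (_ & _ & Hcv) Hd.
  apply is_lim_seq_Reals, is_lim_seq_spec in Hcv.
  generalize (Hcv (mkposreal d Hd)). apply filter_imp. intros n Hn. simpl in Hn.
  apply Rabs_def2 in Hn.
  pose proof (exp_pos (sqrt (INR n))) as He.
  set (E := exp (sqrt (INR n))) in *.
  assert (INR (Tmax n x) = INR (Tmax n x) / E * E) by (field; lra).
  split; nra.
Qed.

Lemma Tmax_nk_window L x d :
  0 < L -> F_half_one x -> 0 < d < 1 ->
  eventually (fun k =>
    (1 - d) ^ 2 * exp (INR k / L) <= INR (Tmax (nk L k) x)
      <= (1 + d) * exp (INR k / L)
    /\ INR (Tmax (nk L (k - 1)) x) <= (1 + d) * exp (- / L) * exp (INR k / L)).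
Proof.
  intros HL Hx Hd.
  pose proof (eventually_nk L _ HL (Tmax_asymptotic x d Hx (proj1 Hd))) as Hn.
  generalize (filter_and _ _ Hn (filter_and _ _ (eventually_pred _ Hn)
                (eventually_INR_ge (L * (1 + / d))))).
  apply filter_imp. intros k ([Hn1 Hn2] & [_ Hm2] & Hk).
  assert (Hk1 : (1 <= k)%nat).
  { destruct k as [|k]; [|lia].
    pose proof (Rinv_0_lt_compat d (proj1 Hd)). simpl in Hk. nra. }
  pose proof (sqrt_nk_le L k HL) as Hsn_le.
  pose proof (sqrt_nk_pred_le L k HL Hk1) as Hsm_le.
  set (t := INR k / L) in *.
  assert (HLt : L * t = INR k) by (unfold t; field; lra).
  assert (Ht : 1 + / d <= t) by (apply Rmult_le_reg_l with L; lra).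
  assert (Hinv : / t <= d).
  { rewrite <- (Rinv_inv d). apply Rinv_le_contravar; [apply Rinv_0_lt_compat|]; lra. }
  assert (Ht1 : 1 <= t) by (pose proof (Rinv_0_lt_compat d (proj1 Hd)); lra).
  pose proof (sqrt_nk_ge L k Ht1) as Hsn_ge. fold t in Hsn_ge.
  pose proof (exp_sub_inv_ge t ltac:(lra)) as Hexp_sub.
  pose proof (exp_le_compat _ _ Hsn_ge) as Hexp_ge.
  pose proof (exp_le_compat _ _ Hsn_le) as Hexp_le.
  pose proof (exp_le_compat _ _ Hsm_le) as Hexp_m.
  unfold Rminus in Hexp_m. rewrite exp_plus in Hexp_m.
  pose proof (exp_pos t). pose proof (exp_pos (- / L)).
  repeat split.
  - assert ((1 - d) * ((1 - d) * exp t) <= (1 - d) * ((1 - / t) * exp t))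
      by (apply Rmult_le_compat_l; [lra | apply Rmult_le_compat_r; lra]).
    nra.
  - nra.
  - nra.
Qed.

(* Any d <= min(eps/2, (1-c)/4) works: (1-d)^2 >= 1 - 2d and (1+d)c < c + d. *)
Lemma exists_margin c eps :
  0 < c < 1 -> 0 < eps ->
  exists d, 0 < d < 1 /\ 1 - eps <= (1 - d) ^ 2 /\ 1 + d <= 1 + eps
            /\ (1 + d) * c < (1 - d) ^ 2.
Proof.
  intros Hc He. exists (Rmin (eps / 2) ((1 - c) / 4)).
  pose proof (Rmin_l (eps / 2) ((1 - c) / 4)).
  pose proof (Rmin_r (eps / 2) ((1 - c) / 4)).
  assert (0 < Rmin (eps / 2) ((1 - c) / 4)) by (apply Rmin_glb_lt; lra).
  repeat split; nra.
Qed.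

Lemma exp_opp_lt_1 a : 0 < a -> 0 < exp (- a) < 1.
Proof.
  intros Ha. split; [apply exp_pos|].
  rewrite <- exp_0. apply exp_increasing. lra.
Qed.

Theorem corollary1 (L : R) (x : R) (eps : R) :
  0 < L -> F_half_one x -> 0 < eps ->
  exists K : nat, forall k : nat, (K <= k)%nat ->
    (1 - eps) * exp (INR k / L)
      <= INR (Ssum (nk L k) x) - INR (Ssum (nk L (k - 1)) x)
    /\ INR (Ssum (nk L k) x) - INR (Ssum (nk L (k - 1)) x)
      <= (1 + eps) * (INR k / L) ^ 2 * exp (INR k / L).
Proof.
  intros HL Hx He.
  assert (Hc : 0 < exp (- / L) < 1) by (apply exp_opp_lt_1, Rinv_0_lt_compat, HL).
  destruct (exists_margin _ _ Hc He) as (d & Hd & Hlo & Hhi & Hsep).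
  destruct (Tmax_nk_window L x d HL Hx Hd) as [K HK].
  exists K. intros k Hk. destruct (HK k Hk) as [[Hn1 Hn2] Hm].
  set (n := nk L k) in *. set (m := nk L (k - 1)) in *.
  pose proof (exp_pos (INR k / L)).
  assert (Hgap : (Tmax m x < Tmax n x)%nat) by (apply INR_lt; nra).
  assert (Hmn : (m <= n)%nat).
  { destruct (le_lt_dec m n) as [|Hnm]; [assumption|].
    pose proof (Tmax_mono x n m (Nat.lt_le_incl _ _ Hnm)). lia. }
  pose proof (le_INR _ _ (Ssum_add_Tmax_le x m n Hgap)) as Hlow.
  pose proof (le_INR _ _ (Ssum_le_add_Tmax x m n Hmn)) as Hup.
  rewrite plus_INR in Hlow, Hup. rewrite mult_INR, minus_INR in Hup by exact Hmn.
  destruct (nk_bounds L k) as [Hn _]. fold n in Hn.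
  pose proof (pos_INR m). pose proof (pos_INR (Tmax n x)).
  split.
  - nra.
  - assert (INR n * INR (Tmax n x) <= (INR k / L) ^ 2 * ((1 + eps) * exp (INR k / L)))
      by (apply Rmult_le_compat; nra).
    nra.
Qed.
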